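(* Let $M$ be a finite regular cell complex with weights $w_\sigma>0$ on its cells, and let $\Delta=dd^*+d^*d$ be the Laplacian on $\Omega^*(M)=\bigoplus_d\Omega^d(M)$. Then $$\operatorname{Ker}(\Delta)\cong H^*(\Omega^*(M))\cong H^*(M;\mathbb{R}).$$
   Context: $C_*(M)$ is the real cellular chain complex of $M$ with boundary $\partial$ (cells oriented), with inner product $\langle\sigma,\sigma'\rangle=\delta_{\sigma,\sigma'}w_\sigma$. A combinatorial differential $d$-form is a linear map $\omega:C_*(M)\to C_*(M)$ with $\omega(C_p(M))\subset C_{p-d}(M)$ such that for each $p$-cell $\alpha$, $\omega(\alpha)$ is a linear combination of $(p-d)$-cells that are faces of $\alpha$; these form $\Omega^d(M)$. The differential $d:\Omega^d(M)\to\Omega^{d+1}(M)$ is $d\omega=\partial\circ\omega-(-1)^d\omega\circ\partial$; it satisfies $d^2=0$, and $H^*(\Omega^*(M))$ denotes the cohomology of the complex $(\Omega^*(M),d)$. $\Omega^*(M)$ carries the $L^2$ inner product $\langle u,v\rangle=\sum_\sigma\frac{1}{w_\sigma}\langle u(\sigma),v(\sigma)\rangle$ (forms of different degree orthogonal), and $d^*$ is the adjoint of $d$ with respect to it. *)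

From HB Require Import structures.
From mathcomp Require Import all_boot all_order all_algebra.
From mathcomp Require Import reals.
Set Implicit Arguments.
Unset Strict Implicit.
Unset Printing Implicit Defensive.
Import Order.TTheory GRing.Theory Num.Theory.
Local Open Scope ring_scope.

(* A finite cell complex M with n cells, the cells being indexed by 'I_n.
   - dim s    : the dimension of the cell s
   - inc s t  : the incidence number [s : t], so that  d s = sum_t [s:t] t
   - face s t : "t is a face of s" (reflexive: s is a face of itself)
   Chains are row vectors 'rV[R]_n (c 0 t = coefficient of the cell t),
   linear maps C_* -> C_* act on the right: c |-> c *m W, so that
   W s t is the coefficient of t in W(s). *)

Section CellComplex.
Variables (R : realType) (n : nat).
Variables (dim : 'I_n -> nat) (inc : 'I_n -> 'I_n -> int) (face : rel 'I_n).

Definition bd : 'M[R]_n := \matrix_(s, t) (inc s t)%:~R.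

Definition supported_on_faces (s : 'I_n) (k : nat) (c : 'rV[R]_n) :=
  forall t, c 0 t != 0 -> face s t && (dim t == k).

(* Regularity enters through: codimension-one faces have incidence +-1,
   the face poset is generated by codimension-one faces, and every closed
   cell (the subcomplex of the faces of a cell) is acyclic (augmented
   real cellular chain complex is exact), as closed cells are balls. *)
Record regular_cell_complex : Prop := {
  face_refl : forall s, face s s;
  face_anti : forall s t, face s t -> face t s -> s = t;
  face_trans : forall s t u, face s t -> face t u -> face s u;
  face_dim : forall s t, face s t -> (dim t <= dim s)%N;
  inc_values : forall s t, inc s t = 0 \/ inc s t = 1 \/ inc s t = -1;
  inc_face : forall s t, inc s t != 0 <-> (face s t /\ dim s = (dim t).+1);
  face_covers : forall s t, face s t -> s <> t ->
      exists2 u, inc s u != 0 & face u t;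
  bd_bd : forall s t, \sum_u inc s u * inc u t = 0;
  bd_aug : forall s, dim s = 1%N -> \sum_t inc s t = 0;
  closed_cell_acyclic : forall (s : 'I_n) (k : nat) (c : 'rV[R]_n),
      supported_on_faces s k c ->
      (if k is 0%N then \sum_t c 0 t == 0 else c *m bd == 0) ->
      exists2 b : 'rV[R]_n, supported_on_faces s k.+1 b & c = b *m bd
}.

Definition maxdeg : nat := (\max_(s : 'I_n) dim s).+1.

Definition degpart (k : nat) (W : 'M[R]_n) : 'M[R]_n :=
  \matrix_(s, t) (if dim s == (dim t + k)%N then W s t else 0).

Definition Omega (k : nat) : {vspace 'M[R]_n} :=
  (\sum_(s : 'I_n) \sum_(t : 'I_n | face s t && (dim s == dim t + k)%N)
      <[delta_mx s t]>)%VS.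

Definition Omega_all : {vspace 'M[R]_n} := (\sum_(k < maxdeg) Omega k)%VS.

(* d on Omega^k :  d w = bd o w - (-1)^k w o bd ;  extended to Omega^* *)
Definition dk (k : nat) (W : 'M[R]_n) : 'M[R]_n :=
  W *m bd - (-1) ^+ k *: (bd *m W).

Definition dform (W : 'M[R]_n) : 'M[R]_n :=
  \sum_(k < maxdeg) dk k (degpart k W).

Fact dform_linear : linear dform.
Proof.
move=> a A B; rewrite /dform scaler_sumr -big_split /=; apply: eq_bigr => k _.
have -> : degpart k (a *: A + B) = a *: degpart k A + degpart k B.
  by apply/matrixP => i j; rewrite !mxE; case: ifP => _; rewrite ?mulr0 ?addr0.
rewrite /dk mulmxDl mulmxDr -!scalemxAl -!scalemxAr.
rewrite scalerDr scalerBr opprD addrACA; congr (_ + _).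
by rewrite !scalerA mulrC.
Qed.

HB.instance Definition _ :=
  GRing.isLinear.Build R 'M[R]_n 'M[R]_n *:%R dform dform_linear.

Definition dlin : 'End('M[R]_n) := linfun dform.

Variable w : 'I_n -> R.

Definition chain_ip (c c' : 'rV[R]_n) : R := \sum_t c 0 t * c' 0 t * w t.

Definition form_ip_deg (U V : 'M[R]_n) : R :=
  \sum_s (w s)^-1 * chain_ip (row s U) (row s V).

(* on Omega^* : forms of different degrees are orthogonal *)
Definition form_ip (U V : 'M[R]_n) : R :=
  \sum_(k < maxdeg) form_ip_deg (degpart k U) (degpart k V).

Definition is_adjoint_of_d (dstar : 'M[R]_n -> 'M[R]_n) : Prop :=
  (forall V, V \in Omega_all -> dstar V \in Omega_all) /\
  (forall U V, U \in Omega_all -> V \in Omega_all ->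
     form_ip (dform U) V = form_ip U (dstar V)).

Definition laplacian (dstar : 'M[R]_n -> 'M[R]_n) (W : 'M[R]_n) : 'M[R]_n :=
  dform (dstar W) + dstar (dform W).

Definition Zform (k : nat) : {vspace 'M[R]_n} := (Omega k :&: lker dlin)%VS.
Definition Bform (k : nat) : {vspace 'M[R]_n} :=
  if k is k'.+1 then (dlin @: Omega k')%VS else 0%VS.
(* dimension of H^k(Omega^*(M)) = dim Z^k - dim B^k  (B^k <= Z^k) *)
Definition dim_H_Omega (k : nat) : nat := (\dim (Zform k) - \dim (Bform k))%N.

(* cochains = column vectors, phi s = value on s; coboundary
   (delta phi)(s) = phi(d s) = sum_t [s:t] phi(t), i.e. delta = bd *m _ *)
Definition Cochains (k : nat) : {vspace 'cV[R]_n} :=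
  (\sum_(s : 'I_n | dim s == k) <[delta_mx s ord0]>)%VS.
Definition coboundary : 'Hom('cV[R]_n, 'cV[R]_n) := linfun (mulmx bd).
Definition Zcell (k : nat) : {vspace 'cV[R]_n} :=
  (Cochains k :&: lker coboundary)%VS.
Definition Bcell (k : nat) : {vspace 'cV[R]_n} :=
  if k is k'.+1 then (coboundary @: Cochains k')%VS else 0%VS.
Definition dim_H_cell (k : nat) : nat := (\dim (Zcell k) - \dim (Bcell k))%N.

End CellComplex.

From HB Require Import structures.
From mathcomp Require Import all_boot all_order all_algebra.
From mathcomp Require Import reals.
From mathcomp Require Import zify.
Set Implicit Arguments.
Unset Strict Implicit.
Unset Printing Implicit Defensive.
Import Order.TTheory GRing.Theory Num.Theory.
Local Open Scope ring_scope.

(* The L^2 product is positive definite on Omega^*, so Delta W = 0 iff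
   dW = 0 and d^*W = 0; the closed k-forms split orthogonally into the
   harmonic ones and d Omega^(k-1) (d^* lowers degrees by one), whence the
   harmonic k-forms have dimension dim Z^k - dim B^k.
   Composing a form with the augmentation eps : C_0(M) -> R gives a cellular
   cochain eps o W, and d becomes +-delta.  Every cellular cochain lifts (send
   each cell to one of its vertices), and a closed form W with eps o W = 0 is
   exact: the rows of W are chains in closed cells, which are acyclic, so a
   staircase argument in this double complex produces a primitive. *)

Lemma memv_span_deltaP (K : fieldType) m p (P : 'I_m -> 'I_p -> bool)
    (A : 'M[K]_(m, p)) :
  A \in (\sum_i \sum_(j | P i j) <[delta_mx i j]>)%VS <->
  (forall i j, A i j != 0 -> P i j).
Proof.
split=> [/memv_sumP[B B_i ->] i0 j0 | A_P].
  rewrite summxE; apply: contraNT => notP0; apply/eqP/big1 => i _.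
  have /memv_sumP[C C_j ->] := B_i i isT.
  rewrite summxE big1 // => j Pij; have /vlineP[c ->] := C_j j Pij.
  rewrite !mxE; case: eqP => [ei|_]; case: eqP => [ej|_]; rewrite ?mulr0 //.
  by rewrite ei ej Pij in notP0.
rewrite [A]matrix_sum_delta; apply: memv_suml => i _; apply: memv_suml => j _.
have [-> | /A_P Pij] := eqVneq (A i j) 0; first by rewrite scale0r mem0v.
by apply: memvZ; rewrite memvE (sumv_sup i) // (sumv_sup j).
Qed.

Lemma mulmx_entry_neq0 (K : pzSemiRingType) m p q (A : 'M[K]_(m, p))
    (B : 'M[K]_(p, q)) i j :
  (A *m B) i j != 0 -> exists2 l, A i l != 0 & B l j != 0.
Proof.
move=> nz.
have [l /andP[Ail Blj] | none] := pickP (fun l => (A i l != 0) && (B l j != 0)).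
  by exists l.
move: nz; rewrite mxE big1 ?eqxx // => l _; have := none l.
by case: (A i l =P 0) => [->|_ /negbFE/eqP->]; rewrite ?mul0r ?mulr0.
Qed.

Lemma linfun_projvE (K : fieldType) (vT wT : vectType K) (U : {vspace vT})
    (f : vT -> wT) :
  (forall a, {in U &, forall u v, f (a *: u + v) = a *: f u + f v}) ->
  {in U, linfun (f \o projv U) =1 f}.
Proof.
move=> f_lin u Uu.
have lin : linear (f \o projv U).
  by move=> a x y; rewrite /= linearP f_lin ?memv_proj.
pose g : {linear vT -> wT} :=
  HB.pack (f \o projv U) (GRing.isLinear.Build _ _ _ _ _ lin).
by have /= -> := lfunE g u; rewrite projv_id.
Qed.

Lemma subn_dim_limg (K : fieldType) (vT wT : vectType K) (f : 'Hom(vT, wT))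
    (B Z : {vspace vT}) :
  (Z :&: lker f = B :&: lker f)%VS ->
  (\dim Z - \dim B = \dim (f @: Z) - \dim (f @: B))%N.
Proof.
by move=> kerZB; rewrite -(limg_ker_dim f Z) -(limg_ker_dim f B) kerZB subnDl.
Qed.

(** * Harmonic representatives in an inner product space *)

Section HarmonicRepresentatives.
Variables (R : numFieldType) (vT : vectType R).
Variables (ip : vT -> vT -> R) (U : {vspace vT}) (D : 'End(vT)) (Dstar : vT -> vT).
Hypothesis ipC : forall x y, ip x y = ip y x.
Hypothesis ipPr : forall x a y z, ip x (a *: y + z) = a * ip x y + ip x z.
Hypothesis ip_gt0 : {in U, forall x, x != 0 -> 0 < ip x x}.
Hypothesis D_U : {in U, forall x, D x \in U}.
Hypothesis Dstar_U : {in U, forall x, Dstar x \in U}.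
Hypothesis D_adjoint : {in U &, forall x y, ip (D x) y = ip x (Dstar y)}.

Lemma ip0r x : ip x 0 = 0.
Proof.
have := ipPr x 1 0 0; rewrite scale1r mul1r addr0 => /esym/eqP.
by rewrite -subr_eq0 addrK => /eqP.
Qed.

Lemma ipBr x y z : ip x (y - z) = ip x y - ip x z.
Proof. by rewrite addrC -scaleN1r ipPr mulN1r addrC. Qed.

Lemma ip_ge0 : {in U, forall x, 0 <= ip x x}.
Proof.
move=> x Ux; have [->|/(ip_gt0 Ux)/ltW //] := eqVneq x 0.
by rewrite ip0r.
Qed.

Lemma ip_eq0 : {in U, forall x, ip x x = 0 -> x = 0}.
Proof.
move=> x Ux ip0; apply/eqP; apply: contraT => /(ip_gt0 Ux).
by rewrite ip0 ltxx.
Qed.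

Lemma Dstar_linear a :
  {in U &, forall x y, Dstar (a *: x + y) = a *: Dstar x + Dstar y}.
Proof.
move=> x y Ux Uy; pose e := Dstar (a *: x + y) - (a *: Dstar x + Dstar y).
have Uax_y : a *: x + y \in U by rewrite rpredD ?rpredZ.
have Ue : e \in U by rewrite /e rpredB ?rpredD ?rpredZ ?Dstar_U.
apply/eqP; rewrite -subr_eq0; apply/eqP; apply: (ip_eq0 Ue).
rewrite {2}/e ipBr ipPr -!D_adjoint //.
by rewrite ipPr subrr.
Qed.

(* [Dstar] is an arbitrary function; adjointness makes it linear on [U], so
   precomposing it with the projection onto [U] gives a linear map. *)
Definition Dstar_lfun : 'End(vT) := linfun (Dstar \o projv U).

Lemma Dstar_lfunE : {in U, Dstar_lfun =1 Dstar}.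
Proof. exact/linfun_projvE/Dstar_linear. Qed.

Lemma laplacian_eq0 x : x \in U ->
  (D (Dstar x) + Dstar (D x) == 0) = (D x == 0) && (Dstar x == 0).
Proof.
move=> Ux; apply/eqP/andP => [lap0|[/eqP-> /eqP->]]; last first.
  by rewrite linear0 (_ : Dstar 0 = 0) ?addr0 // -(Dstar_lfunE (mem0v U)) linear0.
have UDx := D_U Ux; have UDsx := Dstar_U Ux.
have : ip (Dstar x) (Dstar x) + ip (D x) (D x) = 0.
  rewrite -D_adjoint // (D_adjoint Ux UDx) (ipC _ x).
  by rewrite -[ip x (D _)]mul1r -ipPr scale1r lap0 ip0r.
move/eqP; rewrite paddr_eq0 ?ip_ge0 // => /andP[/eqP ds0 /eqP d0].
by split; apply/eqP/ip_eq0.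
Qed.

(* Z is the direct sum of its harmonic part and D C: they meet trivially, and
   D is injective on D^* Z, which lies in C. *)
Lemma dim_harmonic (C Z : {vspace vT}) :
  (C <= U)%VS -> (Z <= U)%VS -> (D @: C <= Z)%VS -> (Dstar_lfun @: Z <= C)%VS ->
  \dim (Z :&: lker Dstar_lfun) = (\dim Z - \dim (D @: C))%N.
Proof.
move=> CU ZU DCZ DsZC; set H := (Z :&: lker Dstar_lfun)%VS.
have HB0 : (H :&: D @: C = 0)%VS.
  apply/eqP; rewrite -subv0; apply/subvP => y; rewrite memv0 !memv_cap memv_ker.
  case/andP=> /andP[Zy /eqP dsy] /memv_imgP[x Cx y_Dx]; subst y.
  have [Ux UDx] := (subvP CU x Cx, subvP ZU _ Zy).
  apply/eqP; apply: (ip_eq0 UDx).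
  by rewrite D_adjoint // -Dstar_lfunE // dsy ip0r.
have DZ_kerD : (Dstar_lfun @: Z :&: lker D = 0)%VS.
  apply/eqP; rewrite -subv0; apply/subvP => y; rewrite memv0 memv_cap memv_ker.
  case/andP=> /memv_imgP[z Zz ->] /eqP dz0.
  have Uz := subvP ZU z Zz; rewrite Dstar_lfunE // in dz0 *.
  apply/eqP; apply: (ip_eq0 (Dstar_U Uz)).
  by rewrite -D_adjoint ?Dstar_U // dz0 ipC ip0r.
apply/eqP; rewrite eqn_leq; apply/andP; split.
  rewrite leq_subRL ?dimvS // addnC -dimv_sum_cap HB0 dimv0 addn0.
  by rewrite dimvS // subv_add capvSl.
rewrite leq_subLR -(limg_ker_dim Dstar_lfun Z) addnC leq_add2r.
rewrite -(limg_ker_dim D (Dstar_lfun @: Z)) DZ_kerD dimv0 add0n.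
by rewrite dimvS // limgS.
Qed.

End HarmonicRepresentatives.

(** * Combinatorial differential forms *)

Section CellComplex.
Variables (R : realType) (n : nat) (dim : 'I_n -> nat).
Variables (inc : 'I_n -> 'I_n -> int) (face : rel 'I_n).
Hypothesis M : regular_cell_complex R dim inc face.
Implicit Types (U V W : 'M[R]_n) (s t u : 'I_n).

Local Notation bd := (bd R inc).
Local Notation maxdeg := (maxdeg dim).
Local Notation Omega := (Omega R dim face).
Local Notation Omega_all := (Omega_all R dim face).
Local Notation dk := (dk inc).
Local Notation dform := (dform dim inc).
Local Notation dlin := (dlin R dim inc).

Lemma dim_lt_maxdeg s : (dim s < maxdeg)%N.
Proof. by rewrite ltnS (leq_bigmax s). Qed.

Lemma bd_face s t : bd s t != 0 -> face s t /\ dim s = (dim t).+1.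
Proof. by rewrite mxE intr_eq0 => /(inc_face M). Qed.

Lemma bd_mulmx_bd : bd *m bd = 0.
Proof.
apply/matrixP => s t; rewrite !mxE.
transitivity ((\sum_u inc s u * inc u t)%:~R : R); last by rewrite (bd_bd M).
by rewrite mulrz_sumr; apply: eq_bigr => u _; rewrite !mxE intrM.
Qed.

Lemma OmegaP k W :
  W \in Omega k <-> forall s t, W s t != 0 -> face s t && (dim s == dim t + k)%N.
Proof. exact: memv_span_deltaP. Qed.

Lemma Omega_ge_maxdeg k W : (maxdeg <= k)%N -> W \in Omega k -> W = 0.
Proof.
move=> le_k /OmegaP W_k; apply/matrixP => s t; rewrite mxE; apply: contraTeq isT.
move=> /W_k /andP[_ /eqP dim_s]; have := dim_lt_maxdeg s.
by rewrite dim_s; lia.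
Qed.

Lemma Omega_sub_all k : (Omega k <= Omega_all)%VS.
Proof.
have [lt_k | le_k] := ltnP k maxdeg; first exact: (sumv_sup (Ordinal lt_k)).
by apply/subvP => W /(Omega_ge_maxdeg le_k) ->; rewrite mem0v.
Qed.

Lemma Omega_allP W :
  W \in Omega_all <-> forall s t, W s t != 0 -> face s t && (dim t <= dim s)%N.
Proof.
split=> [/memv_sumP[V V_k ->] s t | W_supp].
  rewrite summxE; apply: contraNT => notP; apply/eqP/big1 => k _.
  apply: contraNeq notP => /(proj1 (OmegaP _ _) (V_k k isT)) /andP[f_st /eqP->].
  by rewrite f_st leq_addr.
rewrite [W]matrix_sum_delta; apply: memv_suml => s _; apply: memv_suml => t _.
have [-> | /W_supp /andP[f_st le_ts]] := eqVneq (W s t) 0.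
  by rewrite scale0r mem0v.
apply/memvZ/(subvP (Omega_sub_all (dim s - dim t))).
apply/OmegaP => i j; rewrite mxE.
case: (i =P s) => [-> | _]; case: (j =P t) => [-> | _]; rewrite /= ?mulr0n ?eqxx //.
by rewrite f_st subnKC ?eqxx.
Qed.

Definition Omega_pred k : {vspace 'M[R]_n} := if k is k'.+1 then Omega k' else 0%VS.

Lemma Omega_predP k W : W \in Omega_pred k <->
  forall s t, W s t != 0 -> face s t && (dim s + 1 == dim t + k)%N.
Proof.
case: k => [|k] /=; last first.
  by rewrite OmegaP; split=> W_k s t /W_k; rewrite addn1 addnS eqSS.
rewrite memv0; split=> [/eqP-> s t | W_supp]; first by rewrite mxE eqxx.
apply/eqP/matrixP => s t; rewrite mxE; apply: contraTeq isT.
by move=> /W_supp /andP[/(face_dim M) le_ts /eqP]; lia.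
Qed.

Lemma degpart_Omega i k W :
  W \in Omega k -> degpart dim i W = if i == k then W else 0.
Proof.
move=> /OmegaP W_k; apply/matrixP => s t.
case: (i =P k) => [-> | /eqP ne_ik]; rewrite !mxE;
  have [-> | /W_k /andP[_ /eqP->]] := eqVneq (W s t) 0; rewrite ?if_same ?eqxx //.
by rewrite eqn_add2l eq_sym (negPf ne_ik).
Qed.

Lemma mulmx_bd_Omega k W : W \in Omega k -> W *m bd \in Omega k.+1.
Proof.
move=> /OmegaP W_k; apply/OmegaP => s u /mulmx_entry_neq0[t].
move=> /W_k /andP[f_st /eqP->] /bd_face[f_tu ->].
by rewrite (face_trans M f_st f_tu) addSn addnS eqxx.
Qed.

Lemma bd_mulmx_Omega k W : W \in Omega k -> bd *m W \in Omega k.+1.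
Proof.
move=> /OmegaP W_k; apply/OmegaP => s u /mulmx_entry_neq0[t].
move=> /bd_face[f_st ->] /W_k /andP[f_tu /eqP->].
by rewrite (face_trans M f_st f_tu) addnS eqxx.
Qed.

Lemma dk_Omega k W : W \in Omega k -> dk k W \in Omega k.+1.
Proof.
by move=> W_k; rewrite rpredB ?rpredZ ?mulmx_bd_Omega ?bd_mulmx_Omega.
Qed.

Lemma dk0 k : dk k (0 : 'M[R]_n) = 0.
Proof. by rewrite /dk mul0mx mulmx0 scaler0 subr0. Qed.

Lemma dkK k W : dk k.+1 (dk k W) = 0.
Proof.
rewrite /dk mulmxBl mulmxBr -scalemxAl -!scalemxAr -mulmxA bd_mulmx_bd.
rewrite mulmx0 sub0r !mulmxA bd_mulmx_bd mul0mx scaler0 subr0.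
by rewrite exprS mulN1r scaleNr subrr.
Qed.

Lemma dformE k W : W \in Omega k -> dform W = dk k W.
Proof.
move=> W_k; have [lt_k | le_k] := ltnP k maxdeg; last first.
  by rewrite (Omega_ge_maxdeg le_k W_k) linear0 dk0.
rewrite /dform (bigD1 (Ordinal lt_k)) //= big1 => [|i ne_ik].
  by rewrite (degpart_Omega _ W_k) eqxx addr0.
move: ne_ik; rewrite (degpart_Omega _ W_k) -(inj_eq val_inj) => /negPf->.
exact: dk0.
Qed.

Lemma dform_Omega_pred k U :
  U \in Omega_pred k -> dform U = U *m bd + (-1) ^+ k *: (bd *m U).
Proof.
case: k => [|k] /= U_k; last by rewrite (dformE U_k) /dk exprS mulN1r scaleNr.
by move: U_k; rewrite memv0 => /eqP->; rewrite linear0 mul0mx mulmx0 scaler0 addr0.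
Qed.

Lemma degpart_Omega_all k W : W \in Omega_all -> degpart dim k W \in Omega k.
Proof.
move=> /Omega_allP W_supp; apply/OmegaP => s t; rewrite mxE.
by case: ifP => [_ /W_supp /andP[-> _] | _]; rewrite ?eqxx.
Qed.

Lemma dform_Omega_all W : W \in Omega_all -> dform W \in Omega_all.
Proof.
move=> W_OA; apply: rpred_sum => k _.
exact/(subvP (Omega_sub_all k.+1))/dk_Omega/degpart_Omega_all.
Qed.

Lemma dlinE W : dlin W = dform W.
Proof. exact: lfunE. Qed.

Local Notation Zform := (Zform R dim inc face).
Local Notation Bform := (Bform R dim inc face).

Lemma memv_Zform k W : (W \in Zform k) = (W \in Omega k) && (dk k W == 0).
Proof.
rewrite memv_cap memv_ker dlinE.
by case W_k: (W \in Omega k); rewrite //= (dformE W_k).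
Qed.

Lemma dk_Zform k W : W \in Omega k -> dk k W \in Zform k.+1.
Proof. by move=> W_k; rewrite memv_Zform dk_Omega //= dkK. Qed.

Lemma Bform_Omega_pred k : Bform k = (dlin @: Omega_pred k)%VS.
Proof. by case: k => [|k] //=; rewrite limg0. Qed.

Lemma Bform_sub_Zform k : (Bform k <= Zform k)%VS.
Proof.
case: k => [|k]; first exact: sub0v.
apply/subvP => _ /memv_imgP[U U_k ->].
by rewrite dlinE (dformE U_k) dk_Zform.
Qed.

(** * Comparison with cellular cohomology *)

(* The augmentation eps as a 0-cochain: [W *m aug] is the cochain eps o W. *)
Definition aug : 'cV[R]_n := \col_t (dim t == 0%N)%:R.

Lemma mulmx_augE W s :
  (W *m aug) s ord0 = \sum_(t | dim t == 0%N) W s t.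
Proof.
rewrite mxE [RHS]big_mkcond; apply: eq_bigr => t _; rewrite mxE.
by case: eqP; rewrite ?mulr1 ?mulr0.
Qed.

Lemma bd_mulmx_aug : bd *m aug = 0.
Proof.
apply/matrixP => s i; rewrite (ord1 i) mulmx_augE mxE.
have [dim_s | ne1] := eqVneq (dim s) 1%N.
  transitivity ((\sum_t inc s t)%:~R : R); last by rewrite (bd_aug M).
  rewrite mulrz_sumr big_mkcond; apply: eq_bigr => t _; rewrite mxE.
  case: eqP => // /eqP dim_t; apply/esym/eqP; rewrite intr_eq0.
  by apply: contraTT dim_t => /(inc_face M)[_]; rewrite dim_s => -[<-].
apply: big1 => t /eqP dim_t; apply/eqP; apply: contraNT ne1 => /bd_face[_ ->].
by rewrite dim_t.
Qed.

Lemma dk_mulmx_aug k W :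
  dk k W *m aug = - (-1) ^+ k *: (bd *m (W *m aug)).
Proof.
rewrite /dk mulmxBl -mulmxA bd_mulmx_aug mulmx0 sub0r.
by rewrite -scalemxAl mulmxA scaleNr.
Qed.

Local Notation Cochains := (Cochains R dim).

Lemma CochainsP k g :
  g \in Cochains k <-> forall s, g s ord0 != 0 -> dim s == k.
Proof.
have -> : Cochains k = (\sum_s \sum_(j < 1 | dim s == k) <[delta_mx s j]>)%VS.
  by rewrite /Cochains big_mkcond; apply: eq_bigr => s _; rewrite big_ord1_cond.
rewrite memv_span_deltaP; split=> g_k s; first exact: g_k.
by move=> j; rewrite (ord1 j); exact: g_k.
Qed.

Lemma Omega_mulmx_aug k W : W \in Omega k -> W *m aug \in Cochains k.
Proof.
move=> /OmegaP W_k; apply/CochainsP => s; rewrite mulmx_augE.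
apply: contraR => ne_k; apply/eqP/big1 => t /eqP dim_t; apply: contraNeq ne_k.
by move=> /W_k /andP[_]; rewrite dim_t.
Qed.

Lemma exists_codim1_face s : (0 < dim s)%N -> exists2 u, face s u & dim s = (dim u).+1.
Proof.
move=> dim_s_gt0; have [u bd_su | no_face] := pickP (fun u => bd s u != 0).
  by have [f_su dim_su] := bd_face bd_su; exists u.
(* Otherwise s is a cycle of its closed cell, so it bounds there a chain of
   dimension dim s + 1, which must vanish. *)
have [m dim_s] : exists m, dim s = m.+1 by exists (dim s).-1; rewrite prednK.
pose c : 'rV[R]_n := delta_mx 0 s.
have c_supp : supported_on_faces dim face s m.+1 c.
  move=> t; rewrite mxE eqxx /=; have [-> | _] := eqVneq t s; last by rewrite eqxx.
  by rewrite (face_refl M) dim_s eqxx.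
have c_cycle : c *m bd == 0.
  apply/eqP/rowP => u; rewrite -rowE [LHS]mxE [RHS]mxE; apply/eqP.
  exact: negbFE (no_face u).
have [b b_supp c_b] := closed_cell_acyclic M c_supp c_cycle.
have b0 : b = 0.
  apply/rowP => t; rewrite mxE; apply: contraTeq isT.
  by move=> /b_supp /andP[/(face_dim M)]; rewrite dim_s => le /eqP dim_t; lia.
have := congr1 (fun r : 'rV_n => r 0 s) c_b.
by rewrite b0 mul0mx !mxE !eqxx /= => /eqP; rewrite oner_eq0.
Qed.

Lemma exists_vertex s : exists2 v, face s v & dim v = 0%N.
Proof.
have [m] := ubnP (dim s); elim: m s => // m IHm s; rewrite ltnS => le_sm.
have [dim0 | /exists_codim1_face[u f_su dim_su]] := posnP (dim s).
  by exists s; first exact: (face_refl M).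
have [|v f_uv dim_v] := IHm u; first by rewrite -ltnS -dim_su.
by exists v; first exact: (face_trans M f_su f_uv).
Qed.

Lemma lift_cochain k g : g \in Cochains k -> exists2 V, V \in Omega k & V *m aug = g.
Proof.
move=> /CochainsP g_k.
have /fin_all_exists[v v_s] s : exists v, face s v && (dim v == 0%N).
  by have [v f_sv dim_v] := exists_vertex s; exists v; rewrite f_sv dim_v.
exists (\matrix_(s, t) if t == v s then g s ord0 else 0).
  apply/OmegaP => s t; rewrite mxE.
  have [-> /g_k /eqP-> | _] := eqVneq t (v s); last by rewrite eqxx.
  by have /andP[-> /eqP->] := v_s s; rewrite add0n eqxx.
apply/matrixP => s i; rewrite (ord1 i) {i} mulmx_augE.
rewrite (bigD1 (v s)) /=; last by have /andP[] := v_s s.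
rewrite big1 => [|t /andP[_ /negPf ne_t]]; last by rewrite mxE ne_t.
by rewrite mxE eqxx addr0.
Qed.

Definition vanishes_below q W := forall s u, (dim u < q)%N -> W s u = 0.

Lemma vanishes_below_aug q W : vanishes_below q.+1 W -> W *m aug = 0.
Proof.
move=> W_q; apply/matrixP => s i; rewrite (ord1 i) mulmx_augE mxE.
by apply: big1 => u /eqP dim_u; rewrite W_q ?dim_u.
Qed.

Definition slice q W s : 'rV[R]_n := \row_t (if dim t == q then W s t else 0).

Lemma slice_supported j q W s :
  W \in Omega j -> supported_on_faces dim face s q (slice q W s).
Proof.
move=> /OmegaP W_j t; rewrite mxE.
by have [_ /W_j /andP[-> _] | _] := eqVneq (dim t) q; rewrite //= eqxx.
Qed.

Lemma slice_cycle j q W s :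
  W \in Zform j -> W *m aug = 0 -> vanishes_below q W ->
  if q is 0 then \sum_t slice q W s 0 t == 0 else slice q W s *m bd == 0.
Proof.
rewrite memv_Zform => /andP[W_j /eqP dW0] W_aug.
case: q => [_ | q W_q].
  under eq_bigr do rewrite mxE.
  by rewrite -big_mkcond -mulmx_augE W_aug mxE.
apply/eqP/rowP => u; rewrite !mxE.
have [dim_u | ne_u] := eqVneq (dim u) q; last first.
  apply: big1 => t _; rewrite mxE; case: eqP => [dim_t | _]; last by rewrite mul0r.
  have [-> | /bd_face[_ dim_tu]] := eqVneq (bd t u) 0; first by rewrite mulr0.
  by move: ne_u; rewrite -eqSS -dim_tu dim_t eqxx.
transitivity ((W *m bd) s u).
  rewrite mxE; apply: eq_bigr => t _; rewrite mxE; case: eqP => // /eqP ne_t.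
  have [-> | /bd_face[_ dim_tu]] := eqVneq (bd t u) 0; first by rewrite !mulr0.
  by rewrite dim_tu dim_u eqxx in ne_t.
have W_bd : W *m bd = (-1) ^+ j *: (bd *m W).
  by apply/eqP; rewrite -subr_eq0; apply/eqP.
have bdW : (bd *m W) s u = 0.
  by rewrite mxE big1 // => l _; rewrite W_q ?mulr0 // dim_u.
by rewrite W_bd mxE bdW mulr0.
Qed.

(* If W is closed, eps o W = 0 and W vanishes on cells of dimension < q, the
   dimension-q parts of its rows are (augmented) cycles of closed cells, hence
   boundaries of chains b s; subtracting d of the form with rows b s makes W
   vanish in dimension q as well. *)
Section StairStep.
Variables (j q : nat) (W : 'M[R]_n) (b : 'I_n -> 'rV[R]_n).
Hypothesis W_j : W \in Omega j.
Hypothesis W_q : vanishes_below q W.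
Hypothesis b_supp : forall s, supported_on_faces dim face s q.+1 (b s).
Hypothesis b_slice : forall s, slice q W s = b s *m bd.

Definition stair_primitive : 'M[R]_n :=
  \matrix_(s, t) if dim s == (q + j)%N then b s 0 t else 0.
Local Notation P := stair_primitive.

Lemma stair_primitive_supp s t :
  P s t != 0 -> [/\ dim s = (q + j)%N, face s t & dim t = q.+1].
Proof.
rewrite mxE; have [dim_s | _] := eqVneq (dim s) (q + j)%N; last by rewrite eqxx.
by move=> /b_supp /andP[f_st /eqP dim_t].
Qed.

Lemma stair_primitive_Omega_pred : P \in Omega_pred j.
Proof.
apply/Omega_predP => s t /stair_primitive_supp[-> -> ->].
by rewrite addn1 addSn eqxx.
Qed.

Lemma stair_primitive_aug : P *m aug = 0.
Proof.
apply: (@vanishes_below_aug q) => s u lt_uq.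
apply: contraTeq isT => /stair_primitive_supp[_ _ dim_u].
by rewrite dim_u ltnS ltnn in lt_uq.
Qed.

Lemma stair_primitive_mulmx_bd s u : (dim u <= q)%N -> (P *m bd) s u = W s u.
Proof.
rewrite leq_eqVlt => /orP[/eqP dim_u | lt_uq]; last first.
  rewrite W_q // mxE big1 // => t _; apply: contraTeq isT.
  rewrite mulf_eq0 negb_or => /andP[/stair_primitive_supp[_ _ dim_t] /bd_face[_]].
  by rewrite dim_t => -[dim_tu]; rewrite dim_tu ltnn in lt_uq.
have [dim_s | ne_s] := eqVneq (dim s) (q + j)%N.
  have := congr1 (fun r : 'rV_n => r 0 u) (b_slice s); rewrite !mxE dim_u eqxx => ->.
  by apply: eq_bigr => t _; rewrite mxE dim_s eqxx.
rewrite mxE big1 => [|t _]; last by rewrite mxE (negPf ne_s) mul0r.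
apply/esym; apply: contraTeq isT => /(proj1 (OmegaP _ _) W_j) /andP[_ /eqP dim_s].
by rewrite dim_s dim_u addnC eqxx in ne_s.
Qed.

Lemma bd_mulmx_stair_primitive s u : (dim u <= q)%N -> (bd *m P) s u = 0.
Proof.
move=> le_uq; rewrite mxE big1 // => t _; apply: contraTeq isT.
rewrite mulf_eq0 negb_or => /andP[_ /stair_primitive_supp[_ _ dim_u]].
by rewrite dim_u ltnn in le_uq.
Qed.

Lemma stair_step_vanishes : vanishes_below q.+1 (W - dlin P).
Proof.
move=> s u; rewrite ltnS => le_uq.
have -> : (W - dlin P) s u = W s u - ((P *m bd) s u + (-1) ^+ j * (bd *m P) s u).
  by rewrite dlinE (dform_Omega_pred stair_primitive_Omega_pred) !mxE.
by rewrite stair_primitive_mulmx_bd // bd_mulmx_stair_primitive // mulr0 addr0 subrr.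
Qed.

End StairStep.

Lemma stair_step j q W :
  W \in Zform j -> W *m aug = 0 -> vanishes_below q W ->
  exists2 U, U \in Omega_pred j & U *m aug = 0 /\ vanishes_below q.+1 (W - dlin U).
Proof.
move=> W_Z W_aug W_q.
have W_j : W \in Omega j by move: W_Z; rewrite memv_Zform => /andP[].
have /fin_all_exists[b b_s] s : exists b : 'rV_n,
    supported_on_faces dim face s q.+1 b /\ slice q W s = b *m bd.
  have W_s := slice_supported (q := q) (s := s) W_j.
  have W_s_cycle := slice_cycle s W_Z W_aug W_q.
  by have [b b_supp ->] := closed_cell_acyclic M W_s W_s_cycle; exists b.
have b_supp s := proj1 (b_s s); have b_slice s := proj2 (b_s s).
exists (stair_primitive j q b); first exact: stair_primitive_Omega_pred.
split; first exact: stair_primitive_aug.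
exact: stair_step_vanishes.
Qed.

Lemma Zform_aug_exact j W : W \in Zform j -> W *m aug = 0 ->
  exists2 U, U \in Omega_pred j & U *m aug = 0 /\ W = dlin U.
Proof.
suff climb m q V : (maxdeg <= q + m)%N -> V \in Zform j -> V *m aug = 0 ->
    vanishes_below q V -> exists2 U, U \in Omega_pred j & U *m aug = 0 /\ V = dlin U.
  by move=> W_Z W_aug; apply: (climb maxdeg 0%N) => //.
elim: m q V => [|m IHm] q V le_max V_Z V_aug V_q.
  have -> : V = 0.
    apply/matrixP => s u; rewrite mxE V_q //.
    by apply: leq_trans (dim_lt_maxdeg u) _; rewrite addn0 in le_max.
  by exists 0; rewrite ?mem0v ?mul0mx ?linear0.
have [U U_j [U_aug V'_q]] := stair_step V_Z V_aug V_q.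
have dU_Z : dlin U \in Zform j.
  by apply: (subvP (Bform_sub_Zform j)); rewrite Bform_Omega_pred memv_img.
have [|||U' U'_j [U'_aug V'_U']] := IHm q.+1 (V - dlin U) _ _ _ V'_q.
- by rewrite addSnnS.
- by rewrite rpredB.
- exact: vanishes_below_aug V'_q.
exists (U + U'); first by rewrite rpredD.
split; first by rewrite mulmxDl U_aug U'_aug addr0.
by rewrite -[V](subrK (dlin U)) V'_U' addrC linearD.
Qed.

Definition augmentation : 'Hom('M[R]_n, 'cV[R]_n) := linfun (mulmxr aug).

Lemma augmentationE W : augmentation W = W *m aug.
Proof. exact: lfunE. Qed.

Local Notation Zcell := (Zcell R dim inc).
Local Notation Bcell := (Bcell R dim inc).
Local Notation coboundary := (coboundary R inc).

Lemma Zform_ker_augmentation k :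
  (Zform k :&: lker augmentation = Bform k :&: lker augmentation)%VS.
Proof.
apply/eqP; rewrite eqEsubv [X in _ && X]capvS ?Bform_sub_Zform // andbT.
apply/subvP => W /memv_capP[W_Z]; rewrite memv_ker augmentationE => /eqP W_aug.
rewrite memv_cap memv_ker augmentationE W_aug eqxx andbT.
have [U U_k [_ ->]] := Zform_aug_exact W_Z W_aug.
by rewrite Bform_Omega_pred memv_img.
Qed.

Lemma coboundaryE g : coboundary g = bd *m g.
Proof. exact: lfunE. Qed.

Lemma limg_augmentation_Zform k : (augmentation @: Zform k)%VS = Zcell k.
Proof.
apply/vspaceP => g; rewrite memv_cap memv_ker coboundaryE.
apply/memv_imgP/andP => [[W W_Z ->] | [g_k /eqP bd_g]].
  move: W_Z; rewrite memv_Zform augmentationE => /andP[W_k /eqP dW].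
  rewrite Omega_mulmx_aug //=.
  have := dk_mulmx_aug k W; rewrite dW mul0mx => /esym/eqP.
  by rewrite scaler_eq0 oppr_eq0 signr_eq0.
have [V V_k V_g] := lift_cochain g_k.
have dV_aug : dk k V *m aug = 0 by rewrite dk_mulmx_aug V_g bd_g scaler0.
have [U U_k [U_aug dV_U]] := Zform_aug_exact (dk_Zform V_k) dV_aug.
exists (V - U); last by rewrite augmentationE mulmxBl V_g U_aug subr0.
by rewrite memv_cap memv_ker rpredB //= linearB /= dlinE (dformE V_k) dV_U subrr.
Qed.

Lemma limg_augmentation_Bform k : (augmentation @: Bform k)%VS = Bcell k.
Proof.
case: k => [|k]; first by rewrite /= limg0.
apply/vspaceP => g; apply/memv_imgP/memv_imgP.
  move=> [_ /memv_imgP[W W_k ->] ->].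
  exists (- (-1) ^+ k *: (W *m aug)); first by rewrite rpredZ ?Omega_mulmx_aug.
  by rewrite augmentationE dlinE (dformE W_k) dk_mulmx_aug coboundaryE scalemxAr.
move=> [h h_k ->]; have [V V_k V_h] := lift_cochain h_k.
have sV_k : - (-1) ^+ k *: V \in Omega k by rewrite rpredZ.
exists (dlin (- (-1) ^+ k *: V)); first exact: memv_img.
rewrite augmentationE dlinE (dformE sV_k) dk_mulmx_aug coboundaryE -scalemxAl V_h.
by rewrite -scalemxAr scalerA mulrNN -exprMn mulrNN mulr1 expr1n scale1r.
Qed.

Lemma dim_H_Omega_cell k : dim_H_Omega R dim inc face k = dim_H_cell R dim inc k.
Proof.
rewrite /dim_H_Omega /dim_H_cell (subn_dim_limg (Zform_ker_augmentation k)).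
by rewrite limg_augmentation_Zform limg_augmentation_Bform.
Qed.

(** * The L^2 product and harmonic forms *)

Lemma sum_dim_eq (x : R) s t :
  \sum_(k < maxdeg) (if dim s == (dim t + k)%N then x else 0) =
  if (dim t <= dim s)%N then x else 0.
Proof.
case: leqP => [le_ts | lt_st]; last first.
  apply: big1 => k _; rewrite ifN //.
  by apply: contraTN lt_st => /eqP->; rewrite -leqNgt leq_addr.
have lt_max : (dim s - dim t < maxdeg)%N.
  exact: leq_ltn_trans (leq_subr _ _) (dim_lt_maxdeg s).
rewrite (bigD1 (Ordinal lt_max)) //= subnKC // eqxx big1 ?addr0 // => k ne_k.
case: eqP => // dim_s; case/eqP: ne_k; apply: val_inj.
by rewrite /= dim_s addKn.
Qed.

Section HarmonicForms.
Variables (w : 'I_n -> R) (dstar : 'M[R]_n -> 'M[R]_n).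
Hypothesis w_gt0 : forall s, 0 < w s.
Hypothesis dstar_adjoint : is_adjoint_of_d dim inc face w dstar.
Local Notation ip := (form_ip dim w).

Definition ip_weight s t : R := if (dim t <= dim s)%N then w t / w s else 0.

Lemma form_ipE U V : ip U V = \sum_s \sum_t U s t * V s t * ip_weight s t.
Proof.
rewrite /form_ip /form_ip_deg exchange_big; apply: eq_bigr => s _.
under eq_bigr do rewrite /chain_ip mulr_sumr.
rewrite exchange_big; apply: eq_bigr => t _.
transitivity (\sum_(k < maxdeg)
    if dim s == (dim t + k)%N then U s t * V s t * (w t / w s) else 0).
  apply: eq_bigr => k _; rewrite !mxE.
  by case: ifP; rewrite ?mul0r ?mulr0 // mulrC !mulrA.
by rewrite sum_dim_eq /ip_weight; case: ifP; rewrite ?mulr0.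
Qed.

Lemma form_ipC U V : ip U V = ip V U.
Proof.
rewrite !form_ipE; apply: eq_bigr => s _; apply: eq_bigr => t _.
by rewrite [U s t * _]mulrC.
Qed.

Lemma form_ipPr U a V V' : ip U (a *: V + V') = a * ip U V + ip U V'.
Proof.
rewrite !form_ipE mulr_sumr -big_split; apply: eq_bigr => s _.
rewrite mulr_sumr -big_split; apply: eq_bigr => t _.
by rewrite !mxE mulrDr mulrDl mulrCA !mulrA.
Qed.

Lemma form_ip_gt0 : {in Omega_all, forall U, U != 0 -> 0 < ip U U}.
Proof.
move=> U /Omega_allP U_supp U_neq0.
have term_ge0 s t : 0 <= U s t * U s t * ip_weight s t.
  apply: mulr_ge0; first by rewrite -expr2 sqr_ge0.
  by rewrite /ip_weight; case: ifP => // _; rewrite divr_ge0 ?ltW.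
have row_ge0 s : 0 <= \sum_t U s t * U s t * ip_weight s t by rewrite sumr_ge0.
rewrite form_ipE lt_def sumr_ge0 // andbT; apply: contra U_neq0 => /eqP ip0.
apply/eqP/matrixP => s t; rewrite mxE; apply: contraTeq isT => U_st.
have /andP[_ le_ts] := U_supp s t U_st.
have row0 := psumr_eq0P (fun s _ => row_ge0 s) ip0 (i := s) isT.
move: (psumr_eq0P (fun t _ => term_ge0 s t) row0 (i := t) isT) => /eqP.
by rewrite /ip_weight le_ts !mulf_eq0 orbb (negPf U_st) invr_eq0 !gt_eqF.
Qed.

Lemma form_ip_eq0 : {in Omega_all, forall U, ip U U = 0 -> U = 0}.
Proof. exact: ip_eq0 form_ip_gt0. Qed.

Lemma dstar_Omega_pred k V : V \in Omega k -> dstar V \in Omega_pred k.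
Proof.
move=> V_k; have [dstar_OA adj] := dstar_adjoint.
have V_OA := subvP (Omega_sub_all k) V V_k.
have X_OA := dstar_OA V V_OA; set X := dstar V in X_OA *.
(* Y is the part of X off degree k - 1:
   <Y, Y> = <Y, d^* V> = <dY, V> = 0, as dY has no component of degree k. *)
pose Y := \matrix_(s, t) if (dim s + 1 == dim t + k)%N then 0 else X s t.
have Y_OA : Y \in Omega_all.
  apply/Omega_allP => s t; rewrite mxE; case: ifP => _; first by rewrite eqxx.
  exact: (proj1 (Omega_allP X) X_OA).
have dY_V : ip (dform Y) V = 0.
  rewrite form_ipE big1 // => s _; rewrite big1 // => t _.
  have [-> | /(proj1 (OmegaP _ _) V_k) /andP[_ /eqP dim_s]] := eqVneq (V s t) 0.
    by rewrite mulr0 mul0r.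
  suff -> : (dform Y) s t = 0 by rewrite !mul0r.
  rewrite summxE big1 // => i _.
  have [ik | ne_ik] := eqVneq i.+1 k.
    suff -> : degpart dim i Y = 0 by rewrite dk0 mxE.
    apply/matrixP => s' t'; rewrite !mxE; case: eqP => // ->.
    by rewrite -ik addn1 addnS eqxx.
  have /OmegaP dY_i := dk_Omega (degpart_Omega_all i Y_OA).
  apply: contraTeq isT => /dY_i /andP[_].
  by rewrite dim_s eqn_add2l eq_sym (negPf ne_ik).
have Y0 : Y = 0.
  apply: form_ip_eq0 => //; rewrite -[RHS]dY_V adj //.
  rewrite !form_ipE; apply: eq_bigr => s _; apply: eq_bigr => t _.
  by rewrite mxE; case: ifP; rewrite ?mul0r.
apply/Omega_predP => s t X_st.
have /andP[-> _] := proj1 (Omega_allP X) X_OA s t X_st.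
move/matrixP: Y0 => /(_ s t); rewrite !mxE; case: ifP => // _ X0.
by rewrite X0 eqxx in X_st.
Qed.

Let dstar_Omega_all : {in Omega_all, forall V, dstar V \in Omega_all}.
Proof. exact: (proj1 dstar_adjoint). Qed.

Let dlin_Omega_all : {in Omega_all, forall W, dlin W \in Omega_all}.
Proof. by move=> W W_OA; rewrite dlinE dform_Omega_all. Qed.

Let dlin_adjoint : {in Omega_all &, forall U V, ip (dlin U) V = ip U (dstar V)}.
Proof. by move=> U V U_OA V_OA; rewrite dlinE (proj2 dstar_adjoint). Qed.

Local Notation Dstar := (Dstar_lfun Omega_all dstar).

Lemma Dstar_lfun_dstar : {in Omega_all, Dstar =1 dstar}.
Proof. exact: Dstar_lfunE form_ipPr form_ip_gt0 dstar_Omega_all dlin_adjoint. Qed.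

Lemma memv_harmonic k W : (W \in Zform k :&: lker Dstar)%VS =
  (W \in Omega k) && (laplacian dim inc dstar W == 0).
Proof.
rewrite memv_cap memv_Zform memv_ker -andbA; case W_k: (W \in Omega k) => //=.
have W_OA := subvP (Omega_sub_all k) W W_k.
rewrite Dstar_lfun_dstar // -(dformE W_k) /laplacian -!dlinE.
by rewrite (laplacian_eq0 form_ipC form_ipPr form_ip_gt0 dlin_Omega_all dstar_Omega_all
  dlin_adjoint W_OA).
Qed.

Lemma dim_harmonic_space k :
  \dim (Zform k :&: lker Dstar) = dim_H_Omega R dim inc face k.
Proof.
rewrite /dim_H_Omega Bform_Omega_pred.
apply: (dim_harmonic form_ipC form_ipPr form_ip_gt0 dstar_Omega_all dlin_adjoint).
- by case: k => [|k]; rewrite ?sub0v ?Omega_sub_all.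
- exact: subv_trans (capvSl _ _) (Omega_sub_all k).
- by rewrite -Bform_Omega_pred Bform_sub_Zform.
apply/subvP => _ /memv_imgP[W /memv_capP[W_k _] ->].
by rewrite Dstar_lfun_dstar ?dstar_Omega_pred // (subvP (Omega_sub_all k)).
Qed.

End HarmonicForms.

End CellComplex.

Theorem theorem2p6 (R : realType) (n : nat) (dim : 'I_n -> nat)
    (inc : 'I_n -> 'I_n -> int) (face : rel 'I_n) (w : 'I_n -> R)
    (dstar : 'M[R]_n -> 'M[R]_n) :
  regular_cell_complex R dim inc face ->
  (forall s, 0 < w s) ->
  is_adjoint_of_d dim inc face w dstar ->
  forall k : nat,
    exists K : {vspace 'M[R]_n},
      (forall W, (W \in K) =
           (W \in Omega R dim face k) && (laplacian dim inc dstar W == 0)) /\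
      \dim K = dim_H_Omega R dim inc face k /\
      dim_H_Omega R dim inc face k = dim_H_cell R dim inc k.
Proof.
move=> M w_gt0 dstar_adj k.
exists (Zform R dim inc face k :&: lker (Dstar_lfun (Omega_all R dim face) dstar))%VS.
split; first exact: (memv_harmonic M w_gt0 dstar_adj).
by rewrite (dim_harmonic_space M w_gt0 dstar_adj) (dim_H_Omega_cell M).
Qed.
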